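(* In the setting described in the context, for every fixed $t$ and every fixed realization of $(n,w,h,s)$, the function $u\mapsto f_{t,u}$ is convex on $u>0$.
   Context: Let $K,N$ be positive integers, $B(t),\lambda(t)\ge0$. Fixed $n\in\mathbb R^N$, $w,h\in\mathbb R^K$, and an $N\times K$ real matrix $s$. For $x\in\{\pm1\}^K$: $z=\mathbf 1-x$, $h_u(x)=\sqrt u\sum_kh_kx_k+u\sum_kx_k-\sqrt u\sum_k|h_k|$. $Z_{t,u}=\sum_{x\in\{\pm1\}^K}\exp\bigl(-\frac12\|n+N^{-1/2}B(t)^{1/2}sz\|^2-\frac12\|w+\lambda(t)^{1/2}z\|^2+h_u(x)\bigr)$, $f_{t,u}=\frac1K\ln Z_{t,u}$. *)

From HB Require Import structures.
From mathcomp Require Import all_boot all_order all_algebra.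
From mathcomp Require Import all_classical all_reals all_analysis.
Set Implicit Arguments. Unset Strict Implicit. Unset Printing Implicit Defensive.
Import Order.TTheory GRing.Theory Num.Theory.
Local Open Scope ring_scope.

Section Model.
Variables (R : realType) (K N : nat).

(* a spin configuration x in {+1,-1}^K is encoded by b : {ffun 'I_K -> bool},
   with x_k = +1 if b k = true and -1 otherwise *)
Definition spin (b : bool) : R := if b then 1 else -1.

Definition zvec (x : {ffun 'I_K -> bool}) (k : 'I_K) : R := 1 - spin (x k).

Definition hu (h : 'I_K -> R) (u : R) (x : {ffun 'I_K -> bool}) : R :=
  Num.sqrt u * (\sum_k h k * spin (x k)) + u * (\sum_k spin (x k))
  - Num.sqrt u * (\sum_k `|h k|).

Definition Ztu (Bt lt : R) (n : 'I_N -> R) (w h : 'I_K -> R)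
    (s : 'M[R]_(N, K)) (u : R) : R :=
  \sum_(x : {ffun 'I_K -> bool})
    expR (- (1/2) * (\sum_(i < N)
              (n i + (Num.sqrt (N%:R))^-1 * Num.sqrt Bt
                      * (\sum_(k < K) s i k * zvec x k)) ^+ 2)
          - (1/2) * (\sum_(k < K) (w k + Num.sqrt lt * zvec x k) ^+ 2)
          + hu h u x).

Definition ftu (Bt lt : R) (n : 'I_N -> R) (w h : 'I_K -> R)
    (s : 'M[R]_(N, K)) (u : R) : R :=
  (K%:R)^-1 * ln (Ztu Bt lt n w h s u).

End Model.

Definition convex_on_pos (R : realType) (f : R -> R) : Prop :=
  forall (u v a : R), 0 < u -> 0 < v -> 0 <= a -> a <= 1 ->
    f (a * u + (1 - a) * v) <= a * f u + (1 - a) * f v.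

From HB Require Import structures.
From mathcomp Require Import all_boot all_order all_algebra.
From mathcomp Require Import all_classical all_reals all_analysis.
From mathcomp Require Import ring lra.
Import Order.TTheory GRing.Theory Num.Theory.
Local Open Scope ring_scope.

(* In [Z_{t,u} = sum_x exp (E x + h_u x)] only [h_u x] depends on [u], and
   [h_u x = sqrt u (sum_k h_k x_k - sum_k |h_k|) + u sum_k x_k] is convex in [u]
   because the coefficient of the concave function [sqrt u] is nonpositive.
   Log-sum-exp is convex and monotone, so [ln Z_{t,u}] is convex in [u]. *)

Lemma expR_convex {R : realType} (a X Y : R) : 0 <= a -> a <= 1 ->
  expR (a * X + (1 - a) * Y) <= a * expR X + (1 - a) * expR Y.
Proof. by move=> a0 a1; exact: (convex_expR (Itv01 a0 a1)). Qed.

Lemma sqrtr_concave {R : rcfType} (a u v : R) : 0 <= u -> 0 <= v ->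
  0 <= a -> a <= 1 ->
  a * Num.sqrt u + (1 - a) * Num.sqrt v <= Num.sqrt (a * u + (1 - a) * v).
Proof.
move=> u0 v0 a0 a1.
have su := sqrtr_ge0 u; have sv := sqrtr_ge0 v.
have L0 : 0 <= a * Num.sqrt u + (1 - a) * Num.sqrt v by nra.
rewrite -(ger0_norm L0) -sqrtr_sqr ler_sqrt; last by nra.
rewrite -{2}(sqr_sqrtr u0) -{2}(sqr_sqrtr v0).
have gap : 0 <= a * (1 - a) * (Num.sqrt u - Num.sqrt v) ^+ 2.
  by rewrite mulr_ge0 ?sqr_ge0 // mulr_ge0 // subr_ge0.
have gapE : a * Num.sqrt u ^+ 2 + (1 - a) * Num.sqrt v ^+ 2
    - (a * Num.sqrt u + (1 - a) * Num.sqrt v) ^+ 2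
  = a * (1 - a) * (Num.sqrt u - Num.sqrt v) ^+ 2 by ring.
lra.
Qed.

Section LogSumExp.
Context {R : realType} {T : finType} (x0 : T).

Lemma sum_expR_gt0 (F : T -> R) : 0 < \sum_x expR (F x).
Proof.
rewrite (bigD1 x0) //=; apply: ltr_pwDl; first exact: expR_gt0.
by apply: sumr_ge0 => x _; exact: expR_ge0.
Qed.

Lemma ln_sum_expR_le_homo (F G : T -> R) : (forall x, F x <= G x) ->
  ln (\sum_x expR (F x)) <= ln (\sum_x expR (G x)).
Proof.
move=> FG; rewrite ler_ln ?posrE ?sum_expR_gt0 //.
by apply: ler_sum => x _; rewrite ler_expR.
Qed.

(* Hoelder's inequality for the weights [exp F / P] and [exp G / Q]. *)
Lemma ln_sum_expR_convex (F G : T -> R) (a : R) : 0 <= a -> a <= 1 ->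
  ln (\sum_x expR (a * F x + (1 - a) * G x))
  <= a * ln (\sum_x expR (F x)) + (1 - a) * ln (\sum_x expR (G x)).
Proof.
move=> a0 a1.
set P := \sum_x expR (F x); set Q := \sum_x expR (G x).
have P0 : 0 < P by exact: sum_expR_gt0.
have Q0 : 0 < Q by exact: sum_expR_gt0.
set c := a * ln P + (1 - a) * ln Q.
rewrite -ler_expR lnK ?posrE ?sum_expR_gt0 //.
have pointwise x : expR (a * F x + (1 - a) * G x)
    <= expR c * (a * (expR (F x) / P) + (1 - a) * (expR (G x) / Q)).
  rewrite -[expR (F x) / P]lnK ?posrE ?divr_gt0 ?expR_gt0 //.
  rewrite -[expR (G x) / Q]lnK ?posrE ?divr_gt0 ?expR_gt0 //.
  rewrite !lnM ?posrE ?invr_gt0 ?expR_gt0 // !expRK !lnV ?posrE //.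
  apply: le_trans _ (ler_wpM2l (expR_ge0 c) (expR_convex a (F x - ln P) (G x - ln Q) a0 a1)).
  by rewrite -expRD ler_expR /c; lra.
apply: le_trans (ler_sum _ (fun x _ => pointwise x)) _.
rewrite -mulr_sumr big_split /= -!mulr_sumr -!mulr_suml.
by rewrite -/P -/Q !mulfV ?gt_eqF // !mulr1 subrKC mulr1.
Qed.

End LogSumExp.

Lemma sum_mul_spin_le_sum_norm {R : realType} {K : nat} (h : 'I_K -> R)
    (x : {ffun 'I_K -> bool}) :
  \sum_k h k * spin R (x k) <= \sum_k `|h k|.
Proof.
apply: ler_sum => k _; rewrite /spin; case: (x k).
  by rewrite mulr1 ler_norm.
by rewrite mulrN1 -normrN ler_norm.
Qed.

Lemma hu_convex {R : realType} {K : nat} (h : 'I_K -> R) (x : {ffun 'I_K -> bool})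
    (u v a : R) : 0 <= u -> 0 <= v -> 0 <= a -> a <= 1 ->
  hu h (a * u + (1 - a) * v) x <= a * hu h u x + (1 - a) * hu h v x.
Proof.
move=> u0 v0 a0 a1; rewrite /hu.
set S1 := \sum_k _ * _; set S2 := \sum_k spin R _; set S3 := \sum_k `|_|.
have S13 : S1 - S3 <= 0 by rewrite subr_le0 sum_mul_spin_le_sum_norm.
have := ler_wnM2r S13 (sqrtr_concave _ _ _ u0 v0 a0 a1); lra.
Qed.

Lemma ln_sum_expR_hu_convex {R : realType} {K : nat} (E : {ffun 'I_K -> bool} -> R)
    (h : 'I_K -> R) (u v a : R) : 0 <= u -> 0 <= v -> 0 <= a -> a <= 1 ->
  ln (\sum_x expR (E x + hu h (a * u + (1 - a) * v) x))
  <= a * ln (\sum_x expR (E x + hu h u x)) + (1 - a) * ln (\sum_x expR (E x + hu h v x)).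
Proof.
move=> u0 v0 a0 a1.
apply: le_trans _ (ln_sum_expR_convex [ffun=> true] _ _ _ a0 a1).
apply: (ln_sum_expR_le_homo [ffun=> true]) => x.
have := hu_convex h x _ _ _ u0 v0 a0 a1; lra.
Qed.

Theorem lemma4 (R : realType) (K N : nat) (K_gt0 : (0 < K)%N) (N_gt0 : (0 < N)%N)
    (B lambda : R -> R) (B_ge0 : forall t, 0 <= B t) (lambda_ge0 : forall t, 0 <= lambda t)
    (t : R) (n : 'I_N -> R) (w h : 'I_K -> R) (s : 'M[R]_(N, K)) :
  convex_on_pos (fun u => ftu (B t) (lambda t) n w h s u).
Proof.
move=> u v a u0 v0 a0 a1; rewrite /ftu.
rewrite mulrCA [X in _ <= _ + X]mulrCA -mulrDr.
rewrite ler_wpM2l ?invr_ge0 ?ler0n //.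
exact: (ln_sum_expR_hu_convex _ _ _ _ _ (ltW u0) (ltW v0) a0 a1).
Qed.
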